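(* Let $G$ be a finite $2$-connected graph, $T$ its Tutte's tree, and $\delta_G$ the spread of $G$. For every $n\ge2$, if the diameter of $T$ is greater than $4n\cdot\delta_G$, then $G$ contains at least $n$ parallel hinges.
   Context: Graphs are finite and undirected. A tree decomposition of $G$ is a pair $(T,(V_t))$ with $T$ a tree, $V_t\subseteq V_G$, $\bigcup_t V_t=V_G$, every edge inside some $V_t$, and $V_{t_1}\cap V_{t_3}\subseteq V_{t_2}$ whenever $t_2$ is on the $t_1$–$t_3$ path. The torso $\tau_t$ is $G[V_t]$ plus, for each $tt'\in E_T$, an edge joining the two vertices of $V_t\cap V_{t'}$. The Tutte decomposition of a $2$-connected graph is the unique tree decomposition with $|V_t\cap V_{t'}|=2$ for $tt'\in E_T$ whose torsos are $k$-bonds ($k\ge3$), $3$-connected graphs or cycles; $T$ is Tutte's tree. A $2$-separation is $(A,B)$ with $A\cup B=V_G$, $|A\cap B|=2$ and no edge between $A\setminus B$ and $B\setminus A$; $A\cap B$ is a hinge if $G[A]$ or $G[B]$ is $2$-connected. The spread of a vertex is the number of hinges containing it; $\delta_G$ is the maximum spread over all vertices. A sequence of hinges is parallel if the hinges are pairwise disjoint and there is a path $t_1\dots t_p$ in $T$ such that each hinge is contained in some $V_{t_j}$. *)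

(* Finite simple graphs are symmetric irreflexive relations
   on a finType. *)
From mathcomp Require Import all_boot.
Set Implicit Arguments.
Unset Strict Implicit.
Unset Printing Implicit Defensive.

Section Graphs.
Variable V : finType.

Definition induced (e : rel V) (S : {set V}) : rel V :=
  [rel x y | [&& x \in S, y \in S & e x y]].

Definition connected_in (e : rel V) (S : {set V}) : bool :=
  [forall x in S, forall y in S, connect (induced e S) x y].

Definition k_connected (e : rel V) (S : {set V}) (k : nat) : bool :=
  (k < #|S|) &&
  [forall X : {set V}, ((X \subset S) && (#|X| < k)) ==> connected_in e (S :\: X)].

Definition two_connected (e : rel V) : bool := k_connected e setT 2.

Definition two_separation (e : rel V) (A B : {set V}) : bool :=
  [&& A :|: B == setT, #|A :&: B| == 2, A :\: B != set0, B :\: A != set0 &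
      [forall x in A :\: B, forall y in B :\: A, ~~ e x y]].

Definition hinge (e : rel V) (X : {set V}) : bool :=
  [exists A : {set V}, exists B : {set V},
     [&& two_separation e A B, A :&: B == X &
         k_connected e A 2 || k_connected e B 2]].

Definition spread (e : rel V) (v : V) : nat :=
  #|[set X : {set V} | hinge e X & v \in X]|.

Definition graph_spread (e : rel V) : nat := \max_(v : V) spread e v.

End Graphs.

Section Trees.
Variable I : finType.

Definition acyclic (f : rel I) : Prop :=
  forall c : seq I, uniq c -> 3 <= size c -> ~~ cycle f c.

Definition is_tree (f : rel I) : Prop :=
  (exists t : I, True) /\ (forall x y : I, connect f x y) /\ acyclic f.

Definition on_tpath (f : rel I) (t1 t2 t3 : I) : Prop :=
  exists p : seq I,
    [/\ path f t1 p, last t1 p = t3, uniq (t1 :: p) & t2 \in t1 :: p].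

Definition diameter_gt (f : rel I) (k : nat) : Prop :=
  exists x y : I, forall p : seq I, path f x p -> last x p = y -> k < size p.

End Trees.

Section Decompositions.
Variables (V I : finType) (e : rel V) (f : rel I) (B : I -> {set V}).

Definition tree_decomposition : Prop :=
  [/\ is_tree f,
      (forall v : V, exists t, v \in B t),
      (forall x y : V, e x y -> exists t, (x \in B t) && (y \in B t)) &
      (forall t1 t2 t3 : I, on_tpath f t1 t2 t3 -> B t1 :&: B t3 \subset B t2)].

(** number of tree-neighbours t' of t with V_t \cap V_t' = {x,y}
    (= number of virtual torso edges joining x and y) *)
Definition virtual_mult (t : I) (x y : V) : nat :=
  #|[set t' | f t t' & B t :&: B t' == [set x; y]]|.

Definition torso (t : I) : rel V :=
  [rel x y | [&& x \in B t, y \in B t, x != y &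
                 e x y || (0 < virtual_mult t x y)]].

(** the torso at t is a k-bond with k >= 3 (counting parallel edges:
    the real edge xy if present, plus one virtual edge per neighbour) *)
Definition bond_torso (t : I) : Prop :=
  exists x y : V, [/\ x != y, B t = [set x; y] & 3 <= e x y + virtual_mult t x y].

Definition cycle_torso (t : I) : Prop :=
  [/\ 3 <= #|B t|, connected_in (torso t) (B t) &
      forall x, x \in B t -> #|[set y | torso t x y]| = 2].

Definition three_connected_torso (t : I) : Prop :=
  k_connected (torso t) (B t) 3.

(** The Tutte decomposition: adhesion 2, torsos bonds / 3-connected / cycles,
    together with the standard normalisation making it unique. *)
Definition tutte_decomposition : Prop :=
  [/\ tree_decomposition,
      (forall t t', f t t' -> #|B t :&: B t'| = 2) &
      (forall t, [\/ bond_torso t, three_connected_torso t | cycle_torso t])] /\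
  [/\ (forall t t', f t t' -> ~ (bond_torso t /\ bond_torso t')),
      (forall t t', f t t' -> ~ (cycle_torso t /\ cycle_torso t')),
      (forall t t' x y, f t t' -> ~ bond_torso t -> ~ bond_torso t' ->
          B t :&: B t' = [set x; y] -> ~~ e x y) &
      (forall t t1 t2, ~ bond_torso t -> f t t1 -> f t t2 -> t1 != t2 ->
          B t :&: B t1 != B t :&: B t2)].

Definition has_parallel_hinges (n : nat) : Prop :=
  exists s : seq {set V},
    [/\ n <= size s, all (hinge e) s,
        pairwise (fun X Y : {set V} => [disjoint X & Y]) s &
        exists (t1 : I) (p : seq I),
          [/\ path f t1 p, uniq (t1 :: p) &
              forall X, X \in s -> exists2 t, t \in t1 :: p & X \subset B t]].

End Decompositions.

From mathcomp Require Import all_boot zify.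
From Stdlib Require Import Classical_Prop.
Set Implicit Arguments.
Unset Strict Implicit.
Unset Printing Implicit Defensive.

(* Every adhesion set of Tutte's tree is a hinge: across a tree edge, on a side whose
   torso is not a cycle, the union of the bags beyond the edge induces a 2-connected
   graph, since each virtual edge of the torso can be realised by a path through its
   own branch. Along a tree path an adhesion set can only recur at the next edge
   (bonds are not adjacent and adhesion sets at a non-bond are distinct), so a path
   with more than 4nδ edges carries more than 2nδ distinct adhesion sets. Each
   vertex lies in at most δ hinges, so a greedy choice of pairwise disjoint
   adhesion sets yields more than n parallel hinges. *)

Section InducedConnect.
Variables (T : finType) (e : rel T).
Implicit Types (S W : {set T}) (a b u v : T).

Lemma induced_sym S : symmetric e -> symmetric (induced e S).
Proof. by move=> e_sym a b; rewrite /induced /= e_sym andbCA. Qed.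

Lemma connect_induced_sym S : symmetric e -> connect_sym (induced e S).
Proof. by move/(induced_sym S); apply: sym_connect_sym. Qed.

Lemma connect_induced_sub S S' a b : S \subset S' ->
  connect (induced e S) a b -> connect (induced e S') a b.
Proof.
move=> /subsetP sSS'; apply: connect_sub => x y /and3P [xS yS exy].
by apply: connect1; rewrite /induced /= (sSS' _ xS) (sSS' _ yS).
Qed.

Lemma path_induced W a p : path e a p -> all [in W] (a :: p) ->
  path (induced e W) a p.
Proof.
elim: p a => [//|b p IHp] a /= /andP [eab pb] /and3P [aW bW pW].
by rewrite /induced /= aW bW eab IHp //= bW.
Qed.

Lemma connect_induced_in S u a : u \in S -> connect (induced e S) u a -> a \in S.
Proof.
move=> uS /connectP [p + ->]; elim: p u uS => [//|b p IHp] u _ /=.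
by case/andP=> /and3P [_ bS _]; apply: IHp.
Qed.

Lemma connect_induced_component W u v : connect (induced e W) u v ->
  connect (induced e [set w | connect (induced e W) u w]) u v.
Proof.
move=> /connectP [p + ->]; set C := [set w | _].
suff IH a : path (induced e W) a p -> connect (induced e W) u a ->
  connect (induced e C) a (last a p) by move/IH; apply; rewrite connect0.
elim: p a => [|b p IHp] a /=; first by rewrite connect0.
case/andP=> eab pb ua; have ub := connect_trans ua (connect1 eab).
apply: connect_trans (IHp b pb ub); apply: connect1.
by case/and3P: eab => _ _ eab; rewrite /induced /= !inE ua ub.
Qed.

Lemma exit_edge S W u v : u \in S -> connect (induced e W) u v -> v \notin S ->
  exists a b, [/\ a \in S, b \in W :\: S, e a b & connect (induced e S) u a].
Proof.
move=> uS /connectP [p + ->]; elim: p u uS => [|b p IHp] u uS /=.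
  by move=> _; rewrite uS.
case/andP=> /and3P [_ bW eub] pb vS; have [bS|bS] := boolP (b \in S).
  have [a [c [aS cWS eac bc]]] := IHp b bS pb vS.
  exists a, c; split=> //; apply: connect_trans bc.
  by apply: connect1; rewrite /induced /= uS bS eub.
by exists u, b; rewrite inE bS bW connect0.
Qed.

Lemma connected_in_connect S u v : connected_in e S -> u \in S -> v \in S ->
  connect (induced e S) u v.
Proof. by move=> /forall_inP /(_ u) H /H /forall_inP; apply. Qed.

End InducedConnect.

Section SeparationSide.
Variables (T : finType) (e : rel T) (A C Y : {set T}) (x y : T).
Hypotheses (e_sym : symmetric e) (AC_cover : A :|: C = setT)
  (AC_meet : A :&: C = [set x; y])
  (AC_no_cross : forall a b, a \in A :\: C -> b \in C :\: A -> ~~ e a b)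
  (GY_conn : connected_in e (setT :\: Y))
  (xy_conn : x \notin Y -> y \notin Y -> connect (induced e (A :\: Y)) x y).

Let comp u := [set w | connect (induced e (A :\: Y)) u w].

Let comp_self u : u \in comp u.
Proof. by rewrite /comp inE connect0. Qed.

Let comp_sub u : u \in A :\: Y -> comp u \subset A :\: Y.
Proof. by move=> uAY; apply/subsetP=> w; rewrite /comp inE; apply: connect_induced_in. Qed.

Let comp_closed u a b : u \in A :\: Y -> a \in comp u -> b \in A :\: Y -> e a b ->
  b \in comp u.
Proof.
move=> uAY ua bAY eab; have aAY := subsetP (comp_sub uAY) _ ua.
rewrite /comp inE in ua; rewrite inE; apply: connect_trans ua (connect1 _).
by rewrite /induced /= aAY bAY eab.
Qed.

Let GY_path u v : u \in A :\: Y -> v \in A :\: Y -> connect (induced e (setT :\: Y)) u v.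
Proof.
by move=> uAY vAY; apply: connected_in_connect GY_conn _ _;
  apply: subsetP (setSD _ (subsetT A)) _ _.
Qed.

Let comp_meets_adhesion u v : u \in A :\: Y -> v \in A :\: Y -> v \notin comp u ->
  exists2 x0, x0 \in comp u & x0 \in [set x; y].
Proof.
move=> uAY vAY vu.
have [a [b [au /setDP [/setDP [_ bY] bu] eab _]]] :=
  exit_edge (comp_self u) (GY_path uAY vAY) vu.
have aA : a \in A by case/setDP: (subsetP (comp_sub uAY) _ au).
have bA : b \notin A.
  by apply: contra bu => bA; apply: comp_closed uAY au _ eab; rewrite inE bY.
have bC : b \in C by move: (in_setT b); rewrite -AC_cover inE (negbTE bA).
exists a => //; rewrite -AC_meet inE aA; apply/negPn/negP=> aC.
by move: (AC_no_cross (a:=a) (b:=b)); rewrite !inE aA aC bA bC eab => /(_ isT isT).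
Qed.

(* A path of [G - Y] leaves [A] only through the adhesion [{x, y}], and such an
   excursion can be replaced by a path from [x] to [y] inside [A - Y]. *)
Lemma connected_in_separation_side : connected_in e (A :\: Y).
Proof.
apply/forall_inP=> u uAY; apply/forall_inP=> v vAY.
suff : v \in comp u by rewrite /comp inE.
apply/negPn/negP=> vu.
have [x0 x0u x0xy] := comp_meets_adhesion uAY vAY vu.
set S := comp u :|: C :\: A.
have uS : u \in S by rewrite inE comp_self.
have vS : v \notin S by rewrite in_setU negb_or vu in_setD; case/setDP: vAY => ->.
have [a [b [aS /setDP [/setDP [_ bY] bS] eab _]]] := exit_edge uS (GY_path uAY vAY) vS.
move: bS; rewrite in_setU negb_or in_setD negb_and negbK => /andP [bu bCA].
have bA : b \in A.
  by case/orP: bCA => // bC; move: (in_setT b); rewrite -AC_cover inE (negbTE bC) orbF.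
have bAY : b \in A :\: Y by rewrite inE bY.
move: aS; rewrite inE => /orP [au|/setDP [aC aA]].
  by rewrite (comp_closed uAY au bAY eab) in bu.
have bC : b \in C.
  apply/negPn/negP=> bC.
  by move: (AC_no_cross (a:=b) (b:=a)); rewrite !inE aA aC bA bC e_sym eab => /(_ isT isT).
have bxy : b \in [set x; y] by rewrite -AC_meet inE bA.
have x0b : x0 != b by apply: contraNneq bu => <-.
have x0Y : x0 \notin Y by case/setDP: (subsetP (comp_sub uAY) _ x0u).
have cxy : connect (induced e (A :\: Y)) x y.
  by apply: xy_conn; case/set2P: x0xy x0b x0Y => ->; case/set2P: bxy bY => -> //;
    rewrite eqxx.
suff : b \in comp u by rewrite (negbTE bu).
rewrite /comp inE in x0u; rewrite inE; apply: connect_trans x0u _.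
case/set2P: x0xy x0b => ->; case/set2P: bxy => -> //; rewrite ?eqxx //.
by rewrite connect_induced_sym.
Qed.

End SeparationSide.

Section TreeSides.
Variables (I : finType) (f : rel I).
Hypotheses (f_sym : symmetric f) (f_irr : irreflexive f) (f_tree : is_tree f).
Implicit Types (u s t r : I).

Definition side u s : {set I} := [set r | connect (induced f (~: [set u])) s r].

Lemma tree_connect r r' : connect f r r'.
Proof. by case: f_tree => _ []. Qed.

Lemma edge_neq u s : f u s -> s != u.
Proof. by apply: contraTneq => ->; rewrite f_irr. Qed.

(* Removing the edge [us] disconnects [s] from [u]: a detour would close a cycle. *)
Lemma tree_edge_cut u s r : f u s ->
  connect (induced f (~: [set u])) s r -> connect (induced f (~: [set s])) r u -> False.
Proof.
move=> fus sr ru.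
pose g := [rel a b | f a b && ~~ ((a == u) && (b == s) || (a == s) && (b == u))].
have g_avoid w a b : (w == u) || (w == s) -> induced f (~: [set w]) a b -> g a b.
  move=> wus /and3P [aw bw fab]; rewrite !inE in aw bw; rewrite /= fab.
  by case/orP: wus => /eqP wE; rewrite -wE (negbTE aw) (negbTE bw) ?andbF.
have /connectP [p gp pE] : connect g s u.
  apply: connect_trans (connect_sub _ sr) (connect_sub _ ru) => a b h;
    by apply: connect1; apply: g_avoid h; rewrite eqxx ?orbT.
case: (shortenP gp) pE => {gp}p' gp' uniq_p' _ pE.
have su := edge_neq fus.
have size_p' : 2 <= size p'.
  case: p' gp' pE uniq_p' => [|a [|b q]] //=; first by move=> _ uE; rewrite uE eqxx in su.
  by move=> /andP [/andP [_ gsa] _] uE _; rewrite -uE !eqxx orbT in gsa.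
case: f_tree => _ [_ /(_ (s :: p') uniq_p' size_p')] /negP; apply.
by rewrite /cycle rcons_path -pE fus andbT (sub_path _ gp') // => a b /andP [].
Qed.

Lemma side_self u s : s \in side u s.
Proof. by rewrite inE connect0. Qed.

Lemma side_notin u s : f u s -> u \notin side u s.
Proof.
move=> fus; have s_avoids_u : s \in ~: [set u] by rewrite !inE edge_neq.
by apply/negP; rewrite inE => /(connect_induced_in s_avoids_u); rewrite !inE eqxx.
Qed.

Lemma side_closed u s r r' : f u s -> r \in side u s -> f r r' -> r' != u ->
  r' \in side u s.
Proof.
move=> fus sr frr' r'u; have ru : r != u by apply: contraTneq sr => ->; apply: side_notin.
rewrite inE in sr; rewrite inE; apply: connect_trans sr (connect1 _).
by rewrite /induced /= !inE ru r'u.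
Qed.

Lemma side_cover u r : r != u -> exists2 s, f u s & r \in side u s.
Proof.
move=> ru; have /connectP [p fp rE] := tree_connect u r.
case: (shortenP fp) rE => [[|s q]] /=; first by move=> _ _ _ rE; rewrite rE eqxx in ru.
case/andP=> fus fq /andP [uq _] _ rE; exists s => //.
rewrite inE; apply/connectP; exists q => //; apply: path_induced fq _.
by apply/allP=> a qa; rewrite !inE; apply: contraNneq uq => <-.
Qed.

Lemma side_uniq u s1 s2 r : f u s1 -> f u s2 -> r \in side u s1 -> r \in side u s2 ->
  s1 = s2.
Proof.
move=> fus1 fus2; rewrite !inE => s1r s2r; apply/eqP/negPn/negP=> s12.
apply: (tree_edge_cut (r:=s2) fus1).
  by apply: connect_trans s1r _; rewrite connect_induced_sym.
apply: connect1; rewrite /induced /= !inE f_sym fus2 [u == s1]eq_sym (edge_neq fus1).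
by rewrite [s2 == s1]eq_sym s12.
Qed.

Lemma sides_disjoint t t' r : f t t' -> r \in side t t' -> r \in side t' t -> False.
Proof.
rewrite !inE => ftt' t'r tr; apply: (tree_edge_cut ftt' t'r).
by rewrite connect_induced_sym.
Qed.

Lemma side_subset t t' s : f t t' -> f t' s -> s != t -> side t' s \subset side t t'.
Proof.
move=> ftt' ft's st; apply/subsetP=> r; rewrite !inE => /connect_induced_component sr.
have t_out : t \notin side t' s.
  by apply: contra st => ts; rewrite (side_uniq ft's _ ts (side_self t' t)) // f_sym.
apply: connect_trans (connect1 (_ : induced f (~: [set t]) t' s)) _.
  by rewrite /induced /= !inE (edge_neq ftt') st.
apply: connect_induced_sub sr; apply/subsetP=> w sw; rewrite !inE.
by apply: contraNneq t_out => <-.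
Qed.

Lemma path_side u s r p : f u s -> r \in side u s -> path f r p -> u \notin p ->
  last r p \in side u s.
Proof.
move=> fus; elim: p r => [//|r' p IHp] r sr /= /andP [frr' fp].
rewrite inE negb_or => /andP [ur' up]; apply: IHp fp up.
by apply: side_closed fus sr frr' _; rewrite eq_sym.
Qed.

Lemma on_tpath_across u s r1 r2 : f u s -> r1 \in side u s -> r2 \notin side u s ->
  on_tpath f r1 u r2 /\ on_tpath f r1 s r2.
Proof.
move=> fus sr1 sr2.
have /connectP [p1 fp1 sE] : connect (induced f (~: [set u])) r1 s.
  by rewrite connect_induced_sym //; rewrite inE in sr1.
case: (shortenP fp1) sE => {fp1}q1 fq1 uq1 _ sE.
have /connectP [p2 fp2 r2E] := tree_connect u r2.
case: (shortenP fp2) r2E => {fp2}q2 fq2 uq2 _ r2E.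
have q1_side w : w \in r1 :: q1 -> w \in side u s.
  by move=> /(path_connect fq1) r1w; rewrite inE in sr1; rewrite inE (connect_trans sr1 r1w).
have q2_out w : w \in u :: q2 -> w \notin side u s.
  rewrite inE => /predU1P [->|wq2]; first exact: side_notin.
  apply: contra sr2 => sw; rewrite r2E.
  case/splitPr: wq2 fq2 uq2 => qa qb; rewrite cat_path /= => /and3P [_ _ fqb].
  case/andP; rewrite mem_cat negb_or => /andP [_]; rewrite inE negb_or => /andP [_ uqb] _.
  by rewrite last_cat /= (path_side fus sw fqb).
have fq : path f r1 (q1 ++ u :: q2).
  by rewrite cat_path -sE /= f_sym fus fq2 (sub_path _ fq1) // => a b /and3P [].
have uq : uniq (r1 :: q1 ++ u :: q2).
  rewrite -cat_cons cat_uniq uq1 uq2 andbT; apply/hasPn=> w /q2_out.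
  by apply: contra => /q1_side.
split; exists (q1 ++ u :: q2); rewrite ?last_cat -?r2E //.
  by rewrite inE mem_cat inE eqxx !orbT.
by rewrite -cat_cons mem_cat sE mem_last.
Qed.

Lemma on_tpath_prefix t0 p1 p2 w : path f t0 (p1 ++ p2) -> uniq (t0 :: p1 ++ p2) ->
  w \in t0 :: p1 -> on_tpath f t0 w (last t0 p1).
Proof.
rewrite cat_path -cat_cons cat_uniq => /andP [fp1 _] /andP [up1 _] wp1.
by exists p1.
Qed.

End TreeSides.

Section AdjacentRepeats.
Variable T : eqType.

Fixpoint only_adjacent_repeats (s : seq T) : bool :=
  if s is a :: s' then (a \notin behead s') && only_adjacent_repeats s' else true.

Lemma size_only_adjacent_repeats (s : seq T) :
  only_adjacent_repeats s -> size s <= (size (undup s)).*2.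
Proof.
have [m] := ubnP (size s); elim: m s => // m IHm [|a s] //= /ltnSE size_s.
case/andP=> a_s' reps; have [a_s|a_s] := boolP (a \in s); last first.
  by have /= := IHm s size_s reps; rewrite doubleS; lia.
case: s size_s a_s' reps a_s => [//|b s] /= size_s a_s /andP [_ reps].
rewrite inE (negbTE a_s) orbF => /eqP <-; rewrite (negbTE a_s).
by have := IHm s (ltnW size_s) reps; rewrite /= doubleS; lia.
Qed.

End AdjacentRepeats.

Section DisjointSubfamily.
Variable T : finType.
Implicit Type F : {set {set T}}.

(* Greedy choice: an edge [X = {x, y}] meets at most [2 d] members of [F]. *)
Lemma disjoint_subfamily d F :
  (forall v, #|[set X in F | v \in X]| <= d) -> (forall X, X \in F -> #|X| = 2) ->
  exists s : seq {set T}, [/\ {subset s <= F},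
    pairwise (fun X Y : {set T} => [disjoint X & Y]) s & #|F| <= d.*2 * size s].
Proof.
have [m] := ubnP #|F|; elim: m F => // m IHm F /ltnSE card_F deg_F pairs_F.
have [->|/set0Pn [X XF]] := eqVneq F set0; first by exists [::]; rewrite cards0.
have /cards2P [x [y [_ XE]]] : #|X| == 2 by rewrite pairs_F.
set F' := [set Y in F | [disjoint Y & X]].
have F'F : F' \subset F by apply/subsetP=> Y; rewrite inE => /andP [].
have F'_lt : #|F'| < #|F|.
  apply: proper_card; rewrite properE F'F; apply/subsetPn; exists X => //.
  by rewrite inE XF -setI_eq0 setIid XE; apply/set0Pn; exists x; rewrite !inE eqxx.
have deg_F' v : #|[set Y in F' | v \in Y]| <= d.
  apply: leq_trans (deg_F v); apply/subset_leq_card/subsetP=> Y.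
  by rewrite !inE => /andP [/andP [-> _] ->].
have pairs_F' Y : Y \in F' -> #|Y| = 2 by move/(subsetP F'F); apply: pairs_F.
have [s' [s'F' s'_disj card_F']] := IHm F' (leq_trans F'_lt card_F) deg_F' pairs_F'.
exists (X :: s'); split.
- by move=> Y; rewrite inE => /predU1P [->//|/s'F'/(subsetP F'F)].
- rewrite pairwise_cons s'_disj andbT; apply/allP=> Y /s'F'.
  by rewrite inE disjoint_sym => /andP [].
have F_cover : F \subset F' :|: ([set Y in F | x \in Y] :|: [set Y in F | y \in Y]).
  apply/subsetP=> Y YF; rewrite !inE YF /=; case: (boolP [disjoint Y & X]) => //=.
  rewrite -setI_eq0 => /set0Pn [v]; rewrite !inE XE !inE => /andP [vY].
  by case/orP=> /eqP <-; rewrite vY ?orbT.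
apply: leq_trans (subset_leq_card F_cover) _; apply: leq_trans (leq_card_setU _ _).1 _.
rewrite mulnS addnC leq_add //; apply: leq_trans (leq_card_setU _ _).1 _.
by rewrite -addnn leq_add.
Qed.

End DisjointSubfamily.

Lemma exists_notin (T : finType) (P S : {set T}) : #|P| < #|S| ->
  exists2 w, w \in S & w \notin P.
Proof.
move=> card_PS; apply/exists_inP; rewrite -(negbK [exists _ in _, _]).
apply: contraL card_PS => /exists_inPn SP; rewrite -leqNgt subset_leq_card //.
by apply/subsetP=> w /SP /negPn.
Qed.

Lemma hinge_family_degree (V : finType) (e : rel V) (F : {set {set V}}) :
  (forall X, X \in F -> hinge e X) -> forall v, #|[set X in F | v \in X]| <= graph_spread e.
Proof.
move=> F_hinge v; apply: leq_trans (leq_bigmax v); apply/subset_leq_card/subsetP=> X.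
by rewrite !inE => /andP [/F_hinge -> ->].
Qed.

Section TutteDecomposition.
Variables (V I : finType) (e : rel V) (f : rel I) (B : I -> {set V}).
Hypotheses (e_sym : symmetric e) (G2conn : two_connected e)
  (f_sym : symmetric f) (f_irr : irreflexive f) (HT : tutte_decomposition e f B).
Implicit Types (u s t r : I).

Let bond := bond_torso e f B.

Lemma td_tree : is_tree f. Proof. by case: HT => [[[]]]. Qed.

Lemma td_cover v : exists t, v \in B t. Proof. by case: HT => [[[]]]. Qed.

Lemma td_edge x y : e x y -> exists t, (x \in B t) && (y \in B t).
Proof. by case: HT => [[[]]] _ _ + _ _ _ _; apply. Qed.

Lemma td_on_tpath t1 t2 t3 : on_tpath f t1 t2 t3 -> B t1 :&: B t3 \subset B t2.
Proof. by case: HT => [[[]]] _ _ _ + _ _ _; apply. Qed.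

Lemma adhesion_card t t' : f t t' -> #|B t :&: B t'| = 2.
Proof. by case: HT => [[_ + _] _]; apply. Qed.

Lemma torso_kinds t :
  [\/ bond t, three_connected_torso e f B t | cycle_torso e f B t].
Proof. by case: HT => [[_ _ +] _]; apply. Qed.

Lemma no_adjacent_bonds t t' : f t t' -> ~ (bond t /\ bond t').
Proof. by case: HT => [_ [+ _ _ _]]; apply. Qed.

Lemma no_adjacent_cycles t t' : f t t' -> ~ (cycle_torso e f B t /\ cycle_torso e f B t').
Proof. by case: HT => [_ [_ + _ _]]; apply. Qed.

Lemma adhesions_distinct t t1 t2 : ~ bond t -> f t t1 -> f t t2 -> t1 != t2 ->
  B t :&: B t1 != B t :&: B t2.
Proof. by case: HT => [_ [_ _ _ +]]; apply. Qed.

Lemma adhesion_neq t t' x y : f t t' -> B t :&: B t' = [set x; y] -> x != y.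
Proof.
by move=> ftt' adhE; apply/eqP=> xy; have := adhesion_card ftt'; rewrite adhE xy setUid cards1.
Qed.

Lemma bond_card t : bond t -> #|B t| = 2.
Proof. by case=> x [y [xy -> _]]; rewrite cards2 xy. Qed.

Lemma nonbond_card t : ~ bond t -> 2 < #|B t|.
Proof.
by move=> nbt; case: (torso_kinds t) => [//|/andP [/ltnW] //|[]].
Qed.

Lemma two_connected_minus (Y : {set V}) : #|Y| < 2 -> connected_in e (setT :\: Y).
Proof.
by move=> card_Y; case/andP: G2conn => _ /forallP /(_ Y); rewrite subsetT card_Y.
Qed.

Definition branch u s := \bigcup_(r in side f u s) B r.
Definition cobranch u s := \bigcup_(r | r \notin side f u s) B r.

Lemma bag_sub_branch u s t : t \in side f u s -> B t \subset branch u s.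
Proof. by move=> ts; apply: bigcup_sup. Qed.

Lemma bag_sub_cobranch u s t : t \notin side f u s -> B t \subset cobranch u s.
Proof. by move=> ts; apply: bigcup_sup. Qed.

Lemma mem_branch_cobranch u s v : f u s -> v \in branch u s -> v \in cobranch u s ->
  v \in B u /\ v \in B s.
Proof.
move=> fus /bigcupP [r1 r1s vr1] /bigcupP [r2 r2s vr2].
have [on_u on_s] := on_tpath_across f_sym f_irr td_tree fus r1s r2s.
have vr12 : v \in B r1 :&: B r2 by rewrite inE vr1.
by split; [apply: subsetP (td_on_tpath on_u) _ _ | apply: subsetP (td_on_tpath on_s) _ _].
Qed.

Lemma branchUcobranch u s : branch u s :|: cobranch u s = setT.
Proof.
apply/setP=> v; rewrite !inE; have [t vt] := td_cover v.
have [ts|ts] := boolP (t \in side f u s).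
  by rewrite (subsetP (bag_sub_branch ts)).
by rewrite (subsetP (bag_sub_cobranch ts)) ?orbT.
Qed.

Lemma branchIcobranch u s : f u s -> branch u s :&: cobranch u s = B u :&: B s.
Proof.
move=> fus; apply/setP=> v; apply/setIP/setIP=> [[]|[vu vs]].
  exact: mem_branch_cobranch.
split; first exact: subsetP (bag_sub_branch (side_self f u s)) _ vs.
exact: subsetP (bag_sub_cobranch (side_notin f_irr fus)) _ vu.
Qed.

Lemma branch_no_cross u s a b :
  a \in branch u s :\: cobranch u s -> b \in cobranch u s :\: branch u s -> ~~ e a b.
Proof.
case/setDP=> _ a_co /setDP [_ b_br]; apply/negP=> /td_edge [t /andP [a_t b_t]].
have [ts|ts] := boolP (t \in side f u s).
  by rewrite (subsetP (bag_sub_branch ts) _ b_t) in b_br.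
by rewrite (subsetP (bag_sub_cobranch ts) _ a_t) in a_co.
Qed.

Lemma branch_outside_adhesion u s : f u s ->
  exists2 w, w \in branch u s & w \notin B u :&: B s.
Proof.
move=> fus; suff [s' s's [w ws' w_adh]] : exists2 s', s' \in side f u s &
    exists2 w, w \in B s' & w \notin B u :&: B s.
  by exists w => //; apply: subsetP (bag_sub_branch s's) _ ws'.
have [bs|nbs] := classic (bond s); last first.
  exists s; first exact: side_self.
  by apply: exists_notin; rewrite (adhesion_card fus) nonbond_card.
have [x [y [_ BsE mult]]] := bs.
(* a bond torso has at least two virtual edges, so one of them leads away from [u] *)
set N := [set t' | f s t' & B s :&: B t' == [set x; y]].
have : 0 < #|N :\ u|.
  move: mult; rewrite /virtual_mult -/N (cardsD1 u N).
  by case: (e x y); case: (u \in N) => /=; lia.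
case/card_gt0P=> s2; rewrite !inE => /and3P [s2u fss2 adh_s2].
have nbs2 : ~ bond s2 by move=> bs2; apply: (no_adjacent_bonds fss2).
have [w ws2 w_adh] : exists2 w, w \in B s2 & w \notin B s :&: B s2.
  by apply: exists_notin; rewrite (adhesion_card fss2) nonbond_card.
exists s2; first exact: (side_closed f_irr fus (side_self f u s) fss2 s2u).
by exists w => //; apply: contra w_adh; rewrite !inE => /andP [_ ->]; rewrite ws2.
Qed.

Let branch_connect_adhesion_vertex u s a b w : f u s -> B u :&: B s = [set a; b] ->
  a != b -> w \in branch u s -> w \notin B u :&: B s ->
  connect (induced e (branch u s)) w b.
Proof.
move=> fus adhE ab w_br w_adh.
have wa : w != a by apply: contraNneq w_adh => ->; rewrite adhE !inE eqxx.
have Ga : connected_in e (setT :\: [set a]) by apply: two_connected_minus; rewrite cards1.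
have wb : connect (induced e (setT :\: [set a])) w b.
  by apply: connected_in_connect Ga _ _; rewrite !inE ?wa // eq_sym ab.
set S := branch u s :\: (B u :&: B s).
have [||c [d [/setDP [c_br c_adh] /setDP [/setDP [_ da] dS] ecd wc]]] := exit_edge (S:=S) _ wb.
- by rewrite inE w_adh.
- by rewrite inE adhE !inE eqxx orbT.
have c_co : c \notin cobranch u s.
  by apply: contra c_adh => c_co; rewrite -branchIcobranch // inE c_br.
have d_br : d \in branch u s.
  apply/negPn/negP=> d_br; have d_co : d \in cobranch u s.
    by move: (in_setT d); rewrite -(branchUcobranch u s) inE (negbTE d_br).
  by have := @branch_no_cross u s c d; rewrite !inE c_br c_co d_co d_br ecd => /(_ isT isT).
have db : d = b.
  move: dS; rewrite inE d_br andbT negbK adhE => /set2P [dE|//].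
  by move: da; rewrite dE !inE eqxx.
apply: connect_trans (connect_induced_sub (subsetDl _ _) wc) (connect1 _).
by rewrite /induced /= c_br -db d_br.
Qed.

Lemma branch_adhesion_connect u s a b : f u s -> B u :&: B s = [set a; b] ->
  connect (induced e (branch u s)) a b.
Proof.
move=> fus adhE; have ab := adhesion_neq fus adhE.
have [w w_br w_adh] := branch_outside_adhesion fus.
have adhE' : B u :&: B s = [set b; a] by rewrite adhE setUC.
have ba : b != a by rewrite eq_sym.
have wa := branch_connect_adhesion_vertex fus adhE' ba w_br w_adh.
rewrite connect_induced_sym // in wa.
exact: connect_trans wa (branch_connect_adhesion_vertex fus adhE ab w_br w_adh).
Qed.

Lemma branch_subset t t' s : f t t' -> f t' s -> s != t ->
  branch t' s \subset branch t t'.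
Proof.
move=> ftt' ft's st; apply/bigcupsP=> r rs; apply: bag_sub_branch.
exact: subsetP (side_subset f_sym f_irr td_tree ftt' ft's st) _ rs.
Qed.

Lemma mem_two_branches t s1 s2 z : f t s1 -> f t s2 -> s1 != s2 ->
  z \in branch t s1 -> z \in branch t s2 -> z \in B t.
Proof.
move=> fts1 fts2 s12 z_br1 /bigcupP [r rs2 zr].
have rs1 : r \notin side f t s1.
  by apply: contra s12 => rs1; rewrite (side_uniq f_sym f_irr td_tree fts1 fts2 rs1 rs2).
by case: (mem_branch_cobranch fts1 z_br1 (subsetP (bag_sub_cobranch rs1) _ zr)).
Qed.

(* Deleting [c] from the torso at [t'] leaves only virtual edges whose branches avoid [z]. *)
Definition anchor t t' z c :=
  [/\ c \in B t', c \notin B t :&: B t', (z \in B t' -> z = c) &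
      forall s, f t' s -> s != t -> c \notin B s -> z \notin branch t' s].

Lemma exists_anchor t t' z : f t t' -> ~ bond t' -> z \in branch t t' ->
  z \notin B t :&: B t' -> exists c, anchor t t' z c.
Proof.
move=> ftt' nbt' z_br z_adh; have [zt'|zt'] := boolP (z \in B t').
  exists z; split=> // s ft's st zs; apply/negP=> z_brs.
  have z_co := subsetP (bag_sub_cobranch (side_notin f_irr ft's)) _ zt'.
  by have [_ zs'] := mem_branch_cobranch ft's z_brs z_co; rewrite zs' in zs.
have [r rt zr] := bigcupP z_br; have rt' : r != t' by apply: contraNneq zt' => <-.
have [s0 ft's0 rs0] := side_cover td_tree rt'.
have s0t : s0 != t.
  by apply: contraTneq rs0 => ->; apply/negP=> /(sides_disjoint f_sym f_irr td_tree ftt' rt).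
have [c c_adh0 c_adh] : exists2 c, c \in B t' :&: B s0 & c \notin B t :&: B t'.
  have ft't : f t' t by rewrite f_sym.
  apply/subsetPn; apply: contra (adhesions_distinct nbt' ft's0 ft't s0t) => sub.
  by rewrite eqEcard [B t' :&: B t]setIC sub !adhesion_card.
case/setIP: c_adh0 => ct' cs0; exists c; split=> // [/(negP zt')//|s ft's st cs].
apply: contra zt' => z_brs; apply: (mem_two_branches ft's ft's0 _ z_brs).
  by apply: contraNneq cs => ->.
exact: subsetP (bag_sub_branch rs0) _ zr.
Qed.

Lemma branch_minus_connect t t' s z a b : f t t' -> f t' s -> s != t ->
  B t' :&: B s = [set a; b] -> z \notin branch t' s ->
  connect (induced e (branch t t' :\ z)) a b.
Proof.
move=> ftt' ft's st adhE z_brs; apply: connect_induced_sub (branch_adhesion_connect ft's adhE).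
apply/subsetP=> v v_brs; rewrite !inE (subsetP (branch_subset ftt' ft's st)) // andbT.
by apply: contraNneq z_brs => <-.
Qed.

(* A torso path avoiding [c] and one of [x], [y] lifts to a path of [G] in the branch
   minus [z]: each virtual edge is replaced by a path through its own branch. *)
Lemma torso_connect_branch t t' x y z c (W : {set V}) a b : f t t' ->
  B t :&: B t' = [set x; y] -> anchor t t' z c ->
  W \subset B t' :\ c -> (x \notin W) || (y \notin W) ->
  connect (induced (torso e f B t') W) a b -> connect (induced e (branch t t' :\ z)) a b.
Proof.
move=> ftt' adhE [ct' _ zc z_out] /subsetP WB xyW; apply: connect_sub => a' b'.
case/and3P=> a'W b'W /and4P [_ _ _ e_or_virtual].
have W_br v : v \in W -> v \in branch t t' :\ z.
  move/WB; rewrite !inE => /andP [vc vt']; rewrite (subsetP (bag_sub_branch (side_self f t t'))) //.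
  by rewrite andbT; apply: contraNneq vc => vz; rewrite -zc -vz.
have [ea'b'|nea'b'] := boolP (e a' b'); first by apply: connect1; rewrite /induced /= !W_br.
move: e_or_virtual; rewrite (negbTE nea'b') => /card_gt0P [s]; rewrite inE.
case/andP=> ft's /eqP adhE'.
have st : s != t.
  apply: contraTneq xyW => st; rewrite st setIC adhE in adhE'.
  have: x \in [set a'; b'] /\ y \in [set a'; b'] by rewrite -adhE' !inE !eqxx ?orbT.
  by case=> /set2P [] -> /set2P [] ->; rewrite ?a'W ?b'W.
apply: (branch_minus_connect ftt' ft's st adhE'); apply: z_out => //.
apply/negP=> cs; have : c \in B t' :&: B s by rewrite inE ct'.
by rewrite adhE' => /set2P [] cE; [move: (WB _ a'W) | move: (WB _ b'W)];
  rewrite cE !inE eqxx.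
Qed.

Lemma three_connected_branch_connect t t' x y z : f t t' ->
  three_connected_torso e f B t' -> B t :&: B t' = [set x; y] ->
  z \in branch t t' -> z \notin B t :&: B t' ->
  connect (induced e (branch t t' :\ z)) x y.
Proof.
move=> ftt' /andP [card_t' torso_3conn] adhE z_br z_adh.
have nbt' : ~ bond t' by move/bond_card => card2; rewrite card2 in card_t'.
have [c anc] := exists_anchor ftt' nbt' z_br z_adh; case: (anc) => ct' c_adh _ _.
have xy_t' v : v \in [set x; y] -> (v \in B t') * (v != c).
  move=> vxy; have v_adh : v \in B t :&: B t' by rewrite adhE.
  by split; [case/setIP: v_adh | apply: contraNneq c_adh => <-].
have [w wt' w_xyc] : exists2 w, w \in B t' & w \notin [set x; y; c].
  apply: exists_notin; apply: leq_ltn_trans card_t'.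
  by rewrite -setUA cardsU1 cardsU1 cards1; case: (_ \notin _); case: (_ \notin _).
have lift v v' : v \in [set x; y] -> v' \in [set x; y] -> v != v' ->
    connect (induced e (branch t t' :\ z)) w v'.
  move=> vxy v'xy vv'; set W := B t' :\: [set c; v].
  have W_conn : connected_in (torso e f B t') W.
    move/forallP/(_ [set c; v])/implyP: torso_3conn; apply.
    rewrite cards2 ltnS ltnS leq_b1 andbT.
    by apply/subsetP=> u /set2P [] ->; rewrite ?ct' ?(xy_t' v vxy).
  apply: (torso_connect_branch (W := W) ftt' adhE anc).
  - by apply/subsetP=> u; rewrite !inE negb_or => /andP [/andP [-> _] ->].
  - by rewrite /W; case/set2P: vxy => ->; rewrite !inE eqxx ?orbT.
  apply: connected_in_connect W_conn _ _; rewrite !inE negb_or.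
    move: w_xyc; rewrite !inE !negb_or wt' andbT => /andP [/andP [wx wy] ->].
    by case/set2P: vxy => ->.
  by rewrite [v' == v]eq_sym vv' (xy_t' v' v'xy).2 (xy_t' v' v'xy).1.
have xy := adhesion_neq ftt' adhE.
have yx : y != x by rewrite eq_sym.
have wx := lift y x (set22 x y) (set21 x y) yx.
rewrite connect_induced_sym // in wx.
by apply: connect_trans wx (lift x y (set21 x y) (set22 x y) xy).
Qed.

Lemma bond_branch_connect t t' x y z : f t t' -> bond t' ->
  B t :&: B t' = [set x; y] -> z \notin B t :&: B t' ->
  connect (induced e (branch t t' :\ z)) x y.
Proof.
move=> ftt' bt' adhE z_adh; have [a [b [ab BE mult]]] := bt'.
have adhBt' : B t :&: B t' = B t'.
  by apply/eqP; rewrite eqEcard subsetIr adhesion_card // bond_card.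
have abE : [set a; b] = [set x; y] by rewrite -adhE adhBt'.
have [eab|neab] := boolP (e a b).
  apply: connect1; rewrite /induced /= !inE.
  have ab_br v : v \in [set x; y] -> (v != z) && (v \in branch t t').
    rewrite -adhE => v_adh; rewrite (subsetP (bag_sub_branch (side_self f t t'))) ?andbT.
      by apply: contraNneq z_adh => <-.
    by case/setIP: v_adh.
  rewrite !ab_br ?set21 ?set22 //=; have : x \in [set a; b] /\ y \in [set a; b].
    by rewrite abE set21 set22.
  have xy := adhesion_neq ftt' adhE.
  by case=> /set2P [] xE /set2P [] yE; move: xy; rewrite xE yE ?eqxx // e_sym.
(* the virtual edges [ab] lead to at least two branches away from [t] *)
move: mult; rewrite (negbTE neab) add0n /virtual_mult.
set N := [set t'' | f t' t'' & B t' :&: B t'' == [set a; b]] => card_N.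
have /card_gt1P [s1 [s2 [+ + s12]]] : 1 < #|N :\ t|.
  by move: card_N; rewrite (cardsD1 t N); case: (t \in N) => /=; lia.
rewrite !inE abE => /andP [s1t /andP [ft's1 /eqP adh1]] /andP [s2t /andP [ft's2 /eqP adh2]].
have [z_br1|z_br1] := boolP (z \in branch t' s1); last first.
  exact: branch_minus_connect ftt' ft's1 s1t adh1 z_br1.
apply: (branch_minus_connect ftt' ft's2 s2t adh2); apply: contra z_adh => z_br2.
by rewrite adhBt' (mem_two_branches ft's1 ft's2 s12).
Qed.

Lemma branch_minus_vertex_connect t t' x y z : f t t' -> ~ cycle_torso e f B t' ->
  B t :&: B t' = [set x; y] -> z \in branch t t' -> z \notin B t :&: B t' ->
  connect (induced e (branch t t' :\ z)) x y.
Proof.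
move=> ftt' nct' adhE z_br z_adh; case: (torso_kinds t') => [bt'|t'3|//].
  exact: bond_branch_connect.
exact: three_connected_branch_connect.
Qed.

Lemma branch_two_separation t t' : f t t' ->
  two_separation e (branch t t') (cobranch t t').
Proof.
move=> ftt'; have ft't : f t' t by rewrite f_sym.
rewrite /two_separation branchUcobranch branchIcobranch // adhesion_card //= !eqxx /=.
apply/and3P; split.
- have [w w_br w_adh] := branch_outside_adhesion ftt'; apply/set0Pn; exists w.
  by rewrite inE w_br andbT; apply: contra w_adh => w_co; rewrite -branchIcobranch // inE w_br.
- have [w /bigcupP [r rt w_r] w_adh] := branch_outside_adhesion ft't.
  have rt' : r \notin side f t t'.
    by apply/negP=> /(sides_disjoint f_sym f_irr td_tree ftt')/(_ rt).
  have w_co := subsetP (bag_sub_cobranch rt') _ w_r.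
  apply/set0Pn; exists w; rewrite inE w_co andbT; apply: contra w_adh => w_br.
  by rewrite setIC -branchIcobranch // inE w_br.
- by apply/forall_inP=> a a_br; apply/forall_inP=> b b_co; exact: branch_no_cross a_br b_co.
Qed.

Lemma branch_two_connected t t' : f t t' -> ~ cycle_torso e f B t' ->
  k_connected e (branch t t') 2.
Proof.
move=> ftt' nct'; have /eqP/cards2P [x [y [_ adhE]]] := adhesion_card ftt'.
have [w w_br w_adh] := branch_outside_adhesion ftt'.
have adh_br : B t :&: B t' \subset branch t t'.
  by rewrite -branchIcobranch // subsetIl.
apply/andP; split.
  apply: leq_trans (subset_leq_card (_ : w |: (B t :&: B t') \subset _)).
    by rewrite cardsU1 w_adh adhesion_card.
  by rewrite subUset sub1set w_br adh_br.
apply/forallP=> Y; apply/implyP=> /andP [Y_br card_Y].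
apply: (connected_in_separation_side e_sym (branchUcobranch t t') _ _ (two_connected_minus card_Y)).
- by rewrite branchIcobranch // adhE.
- exact: branch_no_cross.
move=> xY yY; have [Y0|[z zY]] := set_0Vmem Y.
  apply: connect_induced_sub (branch_adhesion_connect ftt' adhE).
  by rewrite Y0 setD0.
have YE : Y = [set z].
  by apply/eqP; rewrite eq_sym eqEcard sub1set zY cards1 -ltnS card_Y.
have z_adh : z \notin B t :&: B t'.
  by rewrite adhE; apply/set2P=> -[zE|zE]; [move: xY | move: yY]; rewrite -zE zY.
rewrite YE; exact: branch_minus_vertex_connect ftt' nct' adhE (subsetP Y_br _ zY) z_adh.
Qed.

Lemma adhesion_hinge t t' : f t t' -> hinge e (B t :&: B t').
Proof.
move=> ftt'; have ft't : f t' t by rewrite f_sym.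
wlog nct' : t t' ftt' ft't / ~ cycle_torso e f B t'.
  move=> hyp; have [ct'|] := classic (cycle_torso e f B t'); last exact: hyp.
  rewrite setIC; apply: hyp => // ct; exact: (no_adjacent_cycles ftt').
apply/existsP; exists (branch t t'); apply/existsP; exists (cobranch t t').
by rewrite branch_two_separation // branchIcobranch // eqxx branch_two_connected.
Qed.

Definition adhesions t0 p := pairmap (fun a b => B a :&: B b) t0 p.

Lemma mem_adhesions t0 p X : path f t0 p -> X \in adhesions t0 p ->
  exists a b, [/\ f a b, a \in t0 :: p, b \in p & X = B a :&: B b].
Proof.
elim: p t0 => [//|t1 p IHp] t0 /= /andP [ft01 fp].
rewrite inE => /predU1P [->|/(IHp _ fp) [a [b [fab ap bp ->]]]].
  by exists t0, t1; rewrite !inE !eqxx.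
by exists a, b; rewrite inE ap orbT inE bp orbT.
Qed.

(* Normalisation of the Tutte decomposition: an adhesion set cannot persist along
   three consecutive tree edges. *)
Lemma adhesion_not_sub_later_bags t0 t1 t2 t3 : f t0 t1 -> f t1 t2 -> f t2 t3 ->
  t0 != t2 -> t1 != t3 -> ~~ (B t0 :&: B t1 \subset B t2 :&: B t3).
Proof.
move=> ft01 ft12 ft23 t02 t13; apply/negP=> /subsetIP [sub2 sub3].
have equal_adh t t' : f t t' -> B t0 :&: B t1 \subset B t :&: B t' -> B t :&: B t' = B t0 :&: B t1.
  by move=> ftt' sub; apply/esym/eqP; rewrite eqEcard sub !adhesion_card.
have adh12 : B t1 :&: B t2 = B t0 :&: B t1 by rewrite equal_adh // subsetI subsetIr.
have adh23 : B t2 :&: B t3 = B t0 :&: B t1 by rewrite equal_adh // subsetI sub2.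
have [bt1|nbt1] := classic (bond t1).
  have nbt2 : ~ bond t2 by move=> bt2; apply: (no_adjacent_bonds ft12).
  have ft21 : f t2 t1 by rewrite f_sym.
  by move: (adhesions_distinct nbt2 ft21 ft23 t13); rewrite setIC adh12 adh23 eqxx.
have ft10 : f t1 t0 by rewrite f_sym.
by move: (adhesions_distinct nbt1 ft10 ft12 t02); rewrite setIC adh12 eqxx.
Qed.

Lemma adhesions_only_adjacent_repeats t0 p : path f t0 p -> uniq (t0 :: p) ->
  only_adjacent_repeats (adhesions t0 p).
Proof.
elim: p t0 => [//|t1 p IHp] t0 /= /andP [ft01 fp] /andP [t0p up]; rewrite IHp // andbT.
case: p fp up t0p {IHp} => [//|t2 q] /= /andP [ft12 fq] /andP [t1q uq] t0q.
apply/negP=> /(mem_adhesions fq) [a [b [_ _ bq adhE]]].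
case/splitPr: bq fq uq t0q t1q => q1 q2 fq uq t0q t1q.
set r := t1 :: t2 :: rcons q1 b.
have sub_bags w : w \in t0 :: r -> B t0 :&: B t1 \subset B w.
  move=> wr; apply: subset_trans (td_on_tpath (on_tpath_prefix (p2 := q2) _ _ wr)).
  - by rewrite /r /= last_rcons subsetI subsetIl adhE subsetIr.
  - by rewrite /r /= ft01 ft12 cat_rcons.
  by rewrite /r /= cat_rcons; apply/and3P; split=> //; rewrite inE negb_or t0q.
have [t3 ft23 t3q] : exists2 t3, f t2 t3 & t3 \in rcons q1 b.
  case: (q1) fq => [|t3 q1'] /= /andP [ft23 _]; [exists b | exists t3] => //;
    by rewrite inE eqxx.
have t02 : t0 != t2 by apply: contraNneq t0q => ->; rewrite !inE eqxx !orbT.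
have t13 : t1 != t3.
  apply: contraNneq t1q => ->; rewrite mem_rcons inE in t3q.
  by rewrite inE mem_cat inE; case/orP: t3q => ->; rewrite !orbT.
apply/negP: (adhesion_not_sub_later_bags ft01 ft12 ft23 t02 t13).
have t2r : t2 \in t0 :: r by rewrite !inE eqxx !orbT.
have t3r : t3 \in t0 :: r by rewrite /r !inE t3q !orbT.
by rewrite negbK subsetI !sub_bags.
Qed.

Lemma parallel_adhesion_hinges t0 p : path f t0 p -> uniq (t0 :: p) ->
  exists s : seq {set V}, [/\ size p <= 4 * graph_spread e * size s, all (hinge e) s,
    pairwise (fun X Y : {set V} => [disjoint X & Y]) s &
    forall X, X \in s -> exists2 t, t \in t0 :: p & X \subset B t].
Proof.
move=> fp up; set F := [set X in adhesions t0 p].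
have F_adh X : X \in F -> exists a b, [/\ f a b, a \in t0 :: p, b \in p & X = B a :&: B b].
  by rewrite inE; apply: mem_adhesions.
have F_hinge X : X \in F -> hinge e X.
  by case/F_adh=> a [b [fab _ _ ->]]; apply: adhesion_hinge.
have F_pairs X : X \in F -> #|X| = 2 by case/F_adh=> a [b [fab _ _ ->]]; apply: adhesion_card.
have [s [sF s_disj card_F]] := disjoint_subfamily (hinge_family_degree F_hinge) F_pairs.
exists s; split=> //.
- have : size p <= #|F|.*2.
    rewrite cardsE -(eq_card (mem_undup _)) (card_uniqP (undup_uniq _)).
    rewrite -(size_pairmap (fun a b => B a :&: B b) t0 p).
    exact/size_only_adjacent_repeats/adhesions_only_adjacent_repeats.
  move/leq_trans; apply; rewrite -leq_double in card_F; apply: leq_trans card_F _.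
  by rewrite -!mul2n !mulnA.
- by apply/allP=> X /sF; apply: F_hinge.
by move=> X /sF /F_adh [a [b [_ ap _ ->]]]; exists a => //; apply: subsetIl.
Qed.

End TutteDecomposition.

Theorem mainTheorem15 (V : finType) (e : rel V)
  (e_sym : symmetric e) (e_irr : irreflexive e)
  (G2conn : two_connected e)
  (I : finType) (f : rel I) (f_sym : symmetric f) (f_irr : irreflexive f)
  (B : I -> {set V}) (HT : tutte_decomposition e f B)
  (n : nat) (Hn : 2 <= n) :
  diameter_gt f (4 * n * graph_spread e) ->
  has_parallel_hinges e f B n.
Proof.
case=> x [y far_xy]; have /connectP [p0 fp0 yE] := tree_connect (td_tree HT) x y.
case: (shortenP fp0) yE => {p0 fp0} p fp up _ yE.
have [s [size_p s_hinge s_disj s_bags]] :=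
  parallel_adhesion_hinges e_sym G2conn f_sym f_irr HT fp up.
exists s; split=> //; last by exists x, p.
by have := leq_trans (far_xy p fp (esym yE)) size_p; nia.
Qed.
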